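(* Let $x$ be an ascent sequence that is a restricted growth function (RGF). Then: (i) $x$ contains $0101$ if and only if $x$ contains $101$; (ii) $x$ contains $0102$ if and only if $x$ contains $102$; (iii) $x$ contains $0120$ if and only if $x$ contains $120$; (iv) $x$ contains $0121$ if and only if $x$ contains $021$.
   Context: An ascent in an integer sequence $s_1\cdots s_m$ is an index $j$ with $s_j<s_{j+1}$; $\mathrm{asc}$ denotes the number of ascents. An ascent sequence is a sequence $x_1\cdots x_n$ of nonnegative integers with $x_1=0$ and $x_i\le 1+\mathrm{asc}(x_1\cdots x_{i-1})$ for all $i\ge2$. The reduction $\mathrm{red}(w)$ of an integer sequence $w$ replaces the $i$-th smallest distinct letter of $w$ by $i-1$; a pattern is a reduced sequence. A sequence $x$ contains a pattern $p=p_1\cdots p_k$ if there are indices $i_1<\cdots<i_k$ with $\mathrm{red}(x_{i_1}\cdots x_{i_k})=p$; otherwise $x$ avoids $p$. A sequence $x_1\cdots x_n$ of nonnegative integers is a restricted growth function (RGF) if for each $k\ge1$, the first occurrence of $k$ in $x$ (if any) is preceded by an occurrence of $k-1$. *)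

From mathcomp Require Import all_boot.
Set Implicit Arguments. Unset Strict Implicit. Unset Printing Implicit Defensive.

(* Integer sequences are modelled as [seq nat] (all sequences involved are of
   nonnegative integers). *)

Definition asc (s : seq nat) : nat :=
  count (fun p : nat * nat => p.1 < p.2) (zip s (behead s)).

Definition is_ascent_seq (x : seq nat) : Prop :=
  (size x > 0 -> nth 0 x 0 = 0) /\
  (forall i, 1 <= i < size x -> nth 0 x i <= (asc (take i x)).+1).

(* reduction: the i-th smallest distinct letter becomes i-1, i.e. each letter
   is replaced by the number of distinct letters of w strictly smaller than it *)
Definition red (w : seq nat) : seq nat :=
  [seq size [seq b <- undup w | b < a] | a <- w].

Definition contains (x p : seq nat) : Prop :=
  exists s, subseq s x /\ red s = p.

Definition is_RGF (x : seq nat) : Prop :=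
  forall k, 1 <= k -> k \in x -> (k.-1) \in take (index k x) x.

From mathcomp Require Import all_boot.
Set Implicit Arguments. Unset Strict Implicit.

(* Dropping letters from an occurrence of a pattern leaves an occurrence of the
   reduced subpattern; this gives the forward implications, since 101, 102, 120
   and 021 are subpatterns of 0101, 0102, 0120 and 0121.  Conversely, in an RGF
   every value smaller than a letter a occurs before the first a.  Hence an
   occurrence a b .. of 101, 102 or 120 (with b < a) extends to b a b .., and an
   occurrence a c b of 021 first to b c b and then to a b c b. *)

Definition rank (s : seq nat) (u : nat) : nat := count (fun y => y < u) (undup s).

Lemma redE s : red s = map (rank s) s.
Proof. by apply: eq_map => u; rewrite size_filter. Qed.

Lemma rank_eq_mem s t : s =i t -> rank s =1 rank t.
Proof. by move=> st u; apply/(permP (perm_undup st)). Qed.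

Lemma red_eq_mem s t : s =i t -> red t = map (rank s) t.
Proof. by move=> st; rewrite redE; apply: eq_map => u; rewrite (rank_eq_mem st). Qed.

Lemma count_ltn_mem (l : seq nat) u v : u \in l -> u < v ->
  count (fun y => y < u) l < count (fun y => y < v) l.
Proof.
move=> + uv; elim: l => //= y l IH; rewrite inE => /orP[/eqP<- | /IH lt_counts].
  by rewrite ltnn uv ltnS sub_count // => z /ltn_trans->.
rewrite -addnS leq_add //; case: (ltnP y u) => // yu.
by rewrite (ltn_trans yu uv).
Qed.

Lemma rank_mono s : {in s &, {mono rank s : u v / u < v}}.
Proof.
apply/leqW_mono_in/leq_mono_in => u v us _.
by apply: count_ltn_mem; rewrite mem_undup.
Qed.

Lemma rank_map_mono f t u : {in t &, {mono f : v w / v < w}} -> u \in t ->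
  rank (map f t) (f u) = rank t u.
Proof.
move=> fmono ut.
have finj : {in t &, injective f}.
  by apply/incn_inj_in => v w vt wt; rewrite leqNgt fmono // -leqNgt.
have undup_map : perm_eq (undup (map f t)) (map f (undup t)).
  apply: uniq_perm; first exact: undup_uniq.
    by rewrite map_inj_in_uniq ?undup_uniq // => v w; rewrite !mem_undup; apply: finj.
  by move=> y; rewrite mem_undup (eq_mem_map f (mem_undup t)).
rewrite /rank (permP undup_map) count_map; apply: eq_in_count => y.
by rewrite mem_undup => yt /=; rewrite fmono.
Qed.

Lemma red_map_mono f t : {in t &, {mono f : v w / v < w}} -> red (map f t) = red t.
Proof.
move=> fmono; rewrite !redE -map_comp; apply/eq_in_map => u ut /=.
exact: rank_map_mono.
Qed.

Lemma contains_subpattern x p q : contains x p -> subseq q p -> contains x (red q).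
Proof.
move=> [s [sx <-]] /subseqP[m _ ->]; exists (mask m s); split.
  exact: subseq_trans (mask_subseq m s) sx.
rewrite [red s]redE -map_mask red_map_mono //.
move=> u v us vs; apply: rank_mono; exact: (mem_subseq (mask_subseq m s)).
Qed.

Lemma subseq_cons_take (T : eqType) (a v : T) t x :
  subseq (a :: t) x -> v \in take (index a x) x -> subseq (v :: a :: t) x.
Proof.
elim: x => //= y x IH; rewrite [y == a]eq_sym; case: eqP => // _ sx.
rewrite inE => /orP[/eqP-> | vx]; first by rewrite eqxx.
by case: eqP => // _; apply: IH.
Qed.

Lemma rgf_mem_take_index x v w : is_RGF x -> v < w -> w \in x ->
  v \in take (index w x) x.
Proof.
move=> rgf; elim: w => // w IH; rewrite ltnS leq_eqVlt => /predU1P[-> | vw] wx;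
  have w_before := rgf w.+1 isT wx; first exact: w_before.
have v_before := IH vw (mem_take w_before).
rewrite in_take ?(mem_take v_before) //.
exact: ltn_trans (index_ltn v_before) (index_ltn w_before).
Qed.

Lemma rgf_subseq_cons x v a t : is_RGF x -> v < a ->
  subseq (a :: t) x -> subseq (v :: a :: t) x.
Proof.
move=> rgf va sx; apply: (subseq_cons_take sx).
exact: rgf_mem_take_index rgf va (mem_subseq sx (mem_head a t)).
Qed.

Lemma rgf_contains_cons x h p v : is_RGF x -> v \in p -> v < h ->
  contains x (h :: p) -> contains x (v :: h :: p).
Proof.
move=> rgf vp vh [[|a s] [sx]] //; rewrite redE /= => -[ha ps].
move: vp; rewrite -ps => /mapP[w ws vw].
have wa : w < a.
  by rewrite -(rank_mono (s := a :: s)) ?inE ?ws ?eqxx ?orbT // ha -vw.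
exists (w :: a :: s); split; first exact: rgf_subseq_cons.
rewrite (red_eq_mem (s := a :: s)) /= ?ha -?vw ?ps //.
by move=> y; rewrite !inE; case: (y =P w) => // ->; rewrite ws !orbT.
Qed.

Lemma rgf_contains_insert x u h p v : is_RGF x -> v \in p -> u < v < h ->
  contains x (u :: h :: p) -> contains x (u :: v :: h :: p).
Proof.
move=> rgf vp /andP[uv vh] [[|a [|c s]] [sx]] //; rewrite redE /= => -[ua hc ps].
move: vp; rewrite -ps => /mapP[w ws vw].
have rank_lt := rank_mono (s := [:: a, c & s]).
have aw : a < w by rewrite -rank_lt ?inE ?ws ?eqxx ?orbT // ua -vw.
have wc : w < c by rewrite -rank_lt ?inE ?ws ?eqxx ?orbT // hc -vw.
exists [:: a, w, c & s]; split.
  by apply: rgf_subseq_cons => //; apply: rgf_subseq_cons => //; apply: cons_subseq sx.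
rewrite (red_eq_mem (s := [:: a, c & s])) /= ?ua ?hc -?vw ?ps //.
by move=> y; rewrite !inE; case: (y =P w) => // ->; rewrite ws !orbT.
Qed.

Theorem lemma2p2 (x : seq nat) :
  is_ascent_seq x -> is_RGF x ->
  (contains x [:: 0; 1; 0; 1] <-> contains x [:: 1; 0; 1]) /\
  (contains x [:: 0; 1; 0; 2] <-> contains x [:: 1; 0; 2]) /\
  (contains x [:: 0; 1; 2; 0] <-> contains x [:: 1; 2; 0]) /\
  (contains x [:: 0; 1; 2; 1] <-> contains x [:: 0; 2; 1]).
Proof.
move=> _ rgf; split; [|split; [|split]]; split.
- by move/contains_subpattern => /(_ [:: 1; 0; 1] isT).
- exact: rgf_contains_cons.
- by move/contains_subpattern => /(_ [:: 1; 0; 2] isT).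
- exact: rgf_contains_cons.
- by move/contains_subpattern => /(_ [:: 1; 2; 0] isT).
- exact: rgf_contains_cons.
- by move/contains_subpattern => /(_ [:: 0; 2; 1] isT).
- exact: rgf_contains_insert.
Qed.
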